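(* Let $S=\{a_1,\ldots,a_m\}$ be an alphabet of $m$ distinct letters and let $r_1,\ldots,r_m$ be nonnegative integers. For $k\ge0$ let $n_k$ denote the number of factorizations on $S$ with exactly $k$ parts such that each part is a Carlitz word and, for each $i$, the letter $a_i$ is used exactly $r_i$ times in total. Then \[ \prod_{i=1}^m l_{r_i}(x) = \sum_{k\ge 0} n_k\, l_k(x). \]
   Context: A word is a finite sequence of letters; it is Carlitz if no two adjacent letters are equal. A factorization on $S$ is an ordered list $(\phi_1)\cdots(\phi_k)$ of nonempty words on $S$, its parts. The polynomials $l_k$ are defined by $\sum_{k\ge0}l_k(x)z^k=e^{xz/(1+z)}$, i.e. $l_k(x)=(-1)^kL_k^{(-1)}(x)$ where $L_k^{(\alpha)}$ are the generalized Laguerre polynomials. *)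

From HB Require Import structures.
From mathcomp Require Import all_boot all_order all_algebra.
Set Implicit Arguments. Unset Strict Implicit. Unset Printing Implicit Defensive.
Import Order.TTheory GRing.Theory Num.Theory.
Local Open Scope ring_scope.

(* The alphabet S = {a_1,...,a_m} of m distinct letters is modelled by 'I_m;
   words on S are elements of seq 'I_m; a factorization is a seq of words. *)

Definition carlitz (m : nat) (w : seq 'I_m) : bool :=
  sorted (fun a b : 'I_m => a != b) w.

Definition words_upto (m L : nat) : seq (seq 'I_m) :=
  flatten [seq [seq val t | t : l.-tuple 'I_m] | l <- iota 1 L].

Fixpoint facts_upto (m L k : nat) : seq (seq (seq 'I_m)) :=
  if k is k'.+1 then
    [seq w :: f | w <- words_upto m L, f <- facts_upto m L k']
  else [:: [::]].

Definition good_fact (m : nat) (r : 'I_m -> nat) (f : seq (seq 'I_m)) : bool :=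
  all (@carlitz m) f && [forall i : 'I_m, count_mem i (flatten f) == r i].

(* Such a factorization has total
   length sum_i r_i, so every part has length <= sum_i r_i; hence enumerating
   parts of length at most sum_i r_i counts all of them. *)
Definition nfact (m : nat) (r : 'I_m -> nat) (k : nat) : nat :=
  count (good_fact r) (facts_upto m (\sum_(i < m) r i)%N k).

(* l_k(x) = [z^k] exp(x z/(1+z)).  Expanding,
   exp(xz/(1+z)) = sum_j x^j/j! z^j (1+z)^(-j), and
   [z^k] z^j (1+z)^(-j) = (-1)^(k-j) C(k-1, j-1) for 1 <= j <= k, so
   l_0 = 1 and l_k = sum_{j=1}^k (-1)^(k-j) C(k-1,j-1) x^j / j!  (k >= 1). *)
Definition lpoly (R : numFieldType) (k : nat) : {poly R} :=
  if k is k'.+1 then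
    \sum_(1 <= j < k.+1)
      (((-1) ^+ (k - j) * ('C(k', j.-1))%:R / (j`!)%:R) *: 'X^j)
  else 1.

From HB Require Import structures.
From mathcomp Require Import all_boot all_order all_algebra.
From mathcomp Require Import mpoly.
Import Order.TTheory GRing.Theory Num.Theory.
Local Open Scope ring_scope.
Set Implicit Arguments. Unset Strict Implicit. Unset Printing Implicit Defensive.

(* We compute with polynomials in commuting variables x_1, ..., x_m over R[x],
   modulo all monomials of total degree > N := r_1 + ... + r_m.  Let C be the
   generating function of nonempty Carlitz words (x_i marking a_i) and
   q(y) := y/(1+y).  Splitting a Carlitz word after its first letter gives
   the classical identity q(C) = q(x_1) + ... + q(x_m).  Since
   sum_k l_k(x) y^k = exp(x q(y)) and exp(x(a + b)) = exp(x a) exp(x b),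
     sum_k l_k C^k = exp(x (q(x_1) + ... + q(x_m))) = prod_i sum_t l_t x_i^t,
   and the coefficients of x_1^r_1 ... x_m^r_m are the two sides of the
   identity, because that coefficient of C^k counts the factorizations into
   k Carlitz parts with content r. *)

Section VanishBelow.
Variables (R : comNzRingType) (m : nat).
Local Notation M := {mpoly R[m]}.

Definition vanish_below (n : nat) (f : M) : bool :=
  all (fun mu : 'X_{1..m} => n <= mdeg mu)%N (msupp f).

Lemma vanish_belowP n f :
  reflect (forall mu : 'X_{1..m}, (mdeg mu < n)%N -> f@_mu = 0) (vanish_below n f).
Proof.
apply: (iffP allP) => [f0 mu lt_mu | f0 mu].
  by apply/eqP; rewrite mcoeff_eq0; apply: contraL lt_mu => /f0; rewrite -leqNgt.
by rewrite mcoeff_msupp; apply: contraR; rewrite -ltnNge => /f0 ->; rewrite eqxx.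
Qed.

Lemma vanish_belowW n n' f : (n <= n')%N -> vanish_below n' f -> vanish_below n f.
Proof.
move=> le_nn' /vanish_belowP f0; apply/vanish_belowP => mu lt_mu.
by apply: f0; apply: leq_trans le_nn'.
Qed.

Lemma vanish_below0 n : vanish_below n 0.
Proof. by apply/vanish_belowP => mu _; rewrite mcoeff0. Qed.

Lemma vanish_belowD n f g :
  vanish_below n f -> vanish_below n g -> vanish_below n (f + g).
Proof.
move=> /vanish_belowP f0 /vanish_belowP g0; apply/vanish_belowP => mu lt_mu.
by rewrite mcoeffD f0 ?g0 ?addr0.
Qed.

Lemma vanish_belowN n f : vanish_below n f -> vanish_below n (- f).
Proof. by rewrite /vanish_below (perm_all _ (msuppN f)). Qed.

Lemma vanish_belowB n f g :
  vanish_below n f -> vanish_below n g -> vanish_below n (f - g).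
Proof. by move=> f0 /vanish_belowN; apply: vanish_belowD. Qed.

Lemma vanish_belowZ n (c : R) f : vanish_below n f -> vanish_below n (c *: f).
Proof.
move=> /vanish_belowP f0; apply/vanish_belowP => mu lt_mu.
by rewrite mcoeffZ f0 ?mulr0.
Qed.

Lemma vanish_below_sum n (I : Type) (s : seq I) (P : pred I) (F : I -> M) :
  (forall i, P i -> vanish_below n (F i)) ->
  vanish_below n (\sum_(i <- s | P i) F i).
Proof.
move=> F0; elim/big_rec: _ => [|i f Pi f0]; first exact: vanish_below0.
by apply: vanish_belowD => //; apply: F0.
Qed.

Lemma vanish_belowM n p f g :
  vanish_below n f -> vanish_below p g -> vanish_below (n + p) (f * g).
Proof.
move=> /vanish_belowP f0 /vanish_belowP g0; apply/vanish_belowP => mu lt_mu.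
rewrite mcoeffM big1 // => k /eqP mu_k.
have : (mdeg k.1 + mdeg k.2 < n + p)%N by rewrite -mdegD -mu_k.
case: (ltnP (mdeg k.1) n) => [lt1|le1] lt12; first by rewrite f0 ?mul0r.
rewrite g0 ?mulr0 // -(ltn_add2l (mdeg k.1)).
by apply: leq_trans lt12 _; rewrite leq_add2r.
Qed.

Lemma vanish_belowMr n f g : vanish_below n f -> vanish_below n (f * g).
Proof. by move=> f0; rewrite -[n]addn0; apply: vanish_belowM => //; apply/vanish_belowP. Qed.

Lemma vanish_belowMl n f g : vanish_below n g -> vanish_below n (f * g).
Proof. by rewrite mulrC; apply: vanish_belowMr. Qed.

Lemma vanish_belowX k f : vanish_below 1 f -> vanish_below k (f ^+ k).
Proof.
move=> f0; elim: k => [|k IHk]; first exact/vanish_belowP.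
by rewrite exprS -add1n; apply: vanish_belowM.
Qed.

Lemma vanish_below_mpolyX i : vanish_below 1 'X_i.
Proof. by rewrite /vanish_below msuppX /= mdeg1. Qed.

Lemma vanish_below_mulX i n f : vanish_below n f -> vanish_below n.+1 ('X_i * f).
Proof. by rewrite -add1n; apply: vanish_belowM; apply: vanish_below_mpolyX. Qed.

Variable N : nat.

Definition eq_trunc (f g : M) := vanish_below N.+1 (f - g).

Lemma eq_trunc_refl f : eq_trunc f f.
Proof. by rewrite /eq_trunc subrr; apply: vanish_below0. Qed.

Lemma eq_trunc_sym f g : eq_trunc f g -> eq_trunc g f.
Proof. by rewrite /eq_trunc -opprB => /vanish_belowN; rewrite opprK. Qed.

Lemma eq_trunc_trans f g h : eq_trunc f g -> eq_trunc g h -> eq_trunc f h.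
Proof. by move=> fg gh; have := vanish_belowD fg gh; rewrite addrA subrK. Qed.

Lemma eq_truncD f f' g g' :
  eq_trunc f f' -> eq_trunc g g' -> eq_trunc (f + g) (f' + g').
Proof. by move=> ff' gg'; have := vanish_belowD ff' gg'; rewrite addrACA -opprD. Qed.

Lemma eq_truncM f f' g g' :
  eq_trunc f f' -> eq_trunc g g' -> eq_trunc (f * g) (f' * g').
Proof.
move=> ff' gg'; have := vanish_belowD (vanish_belowMr g ff') (vanish_belowMl f' gg').
by rewrite mulrBl mulrBr addrA subrK.
Qed.

Lemma eq_truncZ (c : R) f g : eq_trunc f g -> eq_trunc (c *: f) (c *: g).
Proof. by rewrite /eq_trunc -scalerBr; apply: vanish_belowZ. Qed.

Lemma eq_truncX f g k : eq_trunc f g -> eq_trunc (f ^+ k) (g ^+ k).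
Proof.
move=> fg; elim: k => [|k IHk]; first exact: eq_trunc_refl.
by rewrite !exprS; apply: eq_truncM.
Qed.

Lemma eq_trunc_sum (I : Type) (s : seq I) (P : pred I) (F G : I -> M) :
  (forall i, P i -> eq_trunc (F i) (G i)) ->
  eq_trunc (\sum_(i <- s | P i) F i) (\sum_(i <- s | P i) G i).
Proof.
move=> FG; elim/big_rec2: _ => [|i f g Pi fg]; first exact: eq_trunc_refl.
by apply: eq_truncD => //; apply: FG.
Qed.

Lemma eq_trunc_prod (I : Type) (s : seq I) (P : pred I) (F G : I -> M) :
  (forall i, P i -> eq_trunc (F i) (G i)) ->
  eq_trunc (\prod_(i <- s | P i) F i) (\prod_(i <- s | P i) G i).
Proof.
move=> FG; elim/big_rec2: _ => [|i f g Pi fg]; first exact: eq_trunc_refl.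
by apply: eq_truncM => //; apply: FG.
Qed.

Lemma eq_trunc_addr f g : vanish_below N.+1 g -> eq_trunc (f + g) f.
Proof. by rewrite /eq_trunc addrC addKr. Qed.

Lemma eq_trunc_mcoeff f g mu :
  eq_trunc f g -> (mdeg mu <= N)%N -> f@_mu = g@_mu.
Proof.
by move=> /vanish_belowP fg le_mu; apply/eqP; rewrite -subr_eq0 -mcoeffB fg.
Qed.

End VanishBelow.

Section TruncatedSeries.
Variables (R : comNzRingType) (m N : nat).
Local Notation M := {mpoly R[m]}.
Local Notation eq_trunc := (eq_trunc N).

Definition inv1p (y : M) : M := \sum_(i < N.+1) (- y) ^+ i.

Definition frac1p (y : M) : M := y * inv1p y.

Lemma mul1p_inv1p y : vanish_below 1 y -> eq_trunc ((1 + y) * inv1p y) 1.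
Proof.
move=> y0; have geom : (1 + y) * inv1p y = 1 - (- y) ^+ N.+1.
  have := subrX1 (- y) N.+1; rewrite -/(inv1p y) => geom.
  by rewrite -opprB geom -mulNr opprB opprK addrC.
rewrite /eq_trunc geom addrC addKr.
by apply: vanish_belowN; apply: vanish_belowX; apply: vanish_belowN.
Qed.

Lemma frac1p_vanish y : vanish_below 1 y -> vanish_below 1 (frac1p y).
Proof. exact: vanish_belowMr. Qed.

(* [frac1p_coef k j] is the coefficient of y^k in (y/(1+y))^j. *)
Definition frac1p_coef (k j : nat) : R :=
  if j is j'.+1 then (if k is k'.+1 then (-1) ^+ (k - j) *+ 'C(k', j') else 0)
  else (k == 0%N)%:R.

Lemma frac1p_coefS k j :
  frac1p_coef k.+1 j.+1 + frac1p_coef k j.+1 = frac1p_coef k j.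
Proof.
case: j => [|j]; case: k => [|k] /=.
- by rewrite addr0 !bin0.
- by rewrite !subn1 /= !bin0 !mulr1n exprS mulN1r addNr.
- by rewrite addr0 bin0n.
rewrite binS mulrnDr !subSS addrAC -[RHS]add0r; congr (_ + _).
case: (ltnP j k) => [lt_jk|le_kj]; first by rewrite -subnSK // exprS mulN1r mulNrn addNr.
by rewrite bin_small ?ltnS // !mulr0n addr0.
Qed.

Definition frac1p_exp_series j (y : M) : M :=
  \sum_(k < N.+1) frac1p_coef k j *: y ^+ k.

Lemma frac1p_exp_series0 y : frac1p_exp_series 0 y = 1.
Proof.
rewrite /frac1p_exp_series big_ord_recl /= scale1r big1 ?addr0 // => k _.
by rewrite scale0r.
Qed.

Lemma frac1p_exp_seriesS j y : vanish_below 1 y ->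
  eq_trunc ((1 + y) * frac1p_exp_series j.+1 y) (y * frac1p_exp_series j y).
Proof.
move=> y0.
have shift : frac1p_exp_series j.+1 y =
    \sum_(k < N) frac1p_coef k.+1 j.+1 *: y ^+ k.+1.
  by rewrite /frac1p_exp_series big_ord_recl /= scale0r add0r.
have mulyE i : y * frac1p_exp_series i y =
    \sum_(k < N) frac1p_coef k i *: y ^+ k.+1 + frac1p_coef N i *: y ^+ N.+1.
  rewrite /frac1p_exp_series mulr_sumr big_ord_recr /= -scalerAr -exprS.
  by congr (_ + _); apply: eq_bigr => k _; rewrite -scalerAr -exprS.
rewrite mulrDl mul1r !mulyE {1}shift addrA -big_split /=.
under eq_bigr do rewrite -scalerDl frac1p_coefS.
apply: eq_truncD; first exact: eq_trunc_refl.
by apply: vanish_belowB; apply: vanish_belowZ; apply: vanish_belowX.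
Qed.

Lemma frac1p_exp j y : vanish_below 1 y ->
  eq_trunc (frac1p y ^+ j) (frac1p_exp_series j y).
Proof.
move=> y0; elim: j => [|j IHj]; first by rewrite frac1p_exp_series0; apply: eq_trunc_refl.
rewrite exprS; apply: eq_trunc_trans (eq_truncM (eq_trunc_refl _ _) IHj) _.
rewrite /frac1p [y * _]mulrC -mulrA.
apply: eq_trunc_trans
  (eq_truncM (eq_trunc_refl _ _) (eq_trunc_sym (frac1p_exp_seriesS j y0))) _.
rewrite mulrA [inv1p y * _]mulrC -[X in eq_trunc _ X]mul1r.
by apply: eq_truncM; [apply: mul1p_inv1p | apply: eq_trunc_refl].
Qed.

Variable u : nat -> R.

(* For u_j = x^j/j! this is exp(x y). *)
Definition dp_series (y : M) : M := \sum_(j < N.+1) u j *: y ^+ j.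

Lemma eq_trunc_dp_series a b : eq_trunc a b -> eq_trunc (dp_series a) (dp_series b).
Proof. by move=> ab; apply: eq_trunc_sum => j _; apply: eq_truncZ; apply: eq_truncX. Qed.

Lemma dp_series_frac1p (l : nat -> R) y :
  (forall k : 'I_N.+1, l k = \sum_(j < N.+1) frac1p_coef k j * u j) ->
  vanish_below 1 y ->
  eq_trunc (\sum_(k < N.+1) l k *: y ^+ k) (dp_series (frac1p y)).
Proof.
move=> lE y0; apply: eq_trunc_sym.
apply: (@eq_trunc_trans _ _ _ _ (\sum_(j < N.+1) u j *: frac1p_exp_series j y)).
  by apply: eq_trunc_sum => j _; apply: eq_truncZ; apply: frac1p_exp.
rewrite (eq_bigr (fun j : 'I_N.+1 =>
    \sum_(k < N.+1) (frac1p_coef k j * u j) *: y ^+ k)); last first.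
  move=> j _; rewrite /frac1p_exp_series scaler_sumr.
  by apply: eq_bigr => k _; rewrite scalerA mulrC.
rewrite exchange_big /=; apply: eq_trunc_sum => k _.
by rewrite -scaler_suml -lE; apply: eq_trunc_refl.
Qed.

Hypothesis u_binomial : forall i j, u (i + j) *+ 'C(i + j, i) = u i * u j.
Hypothesis u0 : u 0 = 1.

Lemma dp_series0 : dp_series 0 = 1.
Proof.
rewrite /dp_series big_ord_recl expr0 u0 scale1r big1 ?addr0 // => i _.
by rewrite expr0n /= scaler0.
Qed.

Lemma dp_seriesD a b : vanish_below 1 a -> vanish_below 1 b ->
  eq_trunc (dp_series (a + b)) (dp_series a * dp_series b).
Proof.
(* The Cauchy product of the two series is the product of two polynomials in
   an auxiliary variable t, evaluated at t = 1. *)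
move=> a0 b0.
pose series_poly (c : M) : {poly M} := \poly_(i < N.+1) (u i *: c ^+ i).
have series_poly_vanish c i : vanish_below 1 c -> vanish_below i (series_poly c)`_i.
  move=> c0; rewrite coef_poly; case: ifP => _; last exact: vanish_below0.
  by apply: vanish_belowZ; apply: vanish_belowX.
pose PA := series_poly a; pose PB := series_poly b.
have size_PAB : (size (PA * PB)%R <= N.+1 + N)%N.
  apply: leq_trans (size_polyMleq _ _) _; rewrite -subn1 leq_subLR.
  by rewrite add1n -addnS leq_add ?size_poly.
have -> : dp_series a * dp_series b = \sum_(n < N.+1 + N) (PA * PB)`_n.
  transitivity (PA * PB).[1].
    rewrite hornerM !horner_poly.
    by congr (_ * _); apply: eq_bigr => i _; rewrite expr1n mulr1.
  by rewrite (horner_coef_wide _ size_PAB); apply: eq_bigr => i _; rewrite expr1n mulr1.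
have high_vanish i : vanish_below N.+1 (PA * PB)`_(N.+1 + i).
  rewrite coefM; apply: vanish_below_sum => j _.
  apply: (@vanish_belowW _ _ _ (j + (N.+1 + i - j))).
    by rewrite subnKC ?leq_addr // -ltnS.
  by apply: vanish_belowM; apply: series_poly_vanish.
have low_coef (n : 'I_N.+1) : (PA * PB)`_n = u n *: (a + b) ^+ n.
  rewrite coefM addrC exprDn scaler_sumr; apply: eq_bigr => i _.
  have le_in : (i <= n)%N by rewrite -ltnS.
  rewrite !coef_poly (leq_ltn_trans le_in (ltn_ord n)).
  rewrite (leq_ltn_trans (leq_subr i n) (ltn_ord n)) -scalerAl -scalerAr scalerA.
  have <- : u n *+ 'C(n, i) = u i * u (n - i) by rewrite -u_binomial subnKC.
  by rewrite -scalerMnl scalerMnr mulrC.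
rewrite big_split_ord /=; apply: eq_trunc_sym; apply: eq_trunc_trans (eq_trunc_addr _ _) _.
  exact: vanish_below_sum.
by rewrite /dp_series; under eq_bigr do rewrite low_coef; apply: eq_trunc_refl.
Qed.

Lemma dp_series_sum (I : Type) (s : seq I) (P : pred I) (F : I -> M) :
  (forall i, P i -> vanish_below 1 (F i)) ->
  eq_trunc (dp_series (\sum_(i <- s | P i) F i)) (\prod_(i <- s | P i) dp_series (F i)).
Proof.
move=> F0; elim: s => [|i s IHs].
  by rewrite !big_nil dp_series0; apply: eq_trunc_refl.
rewrite !big_cons; case: ifP => // Pi.
apply: eq_trunc_trans (dp_seriesD (F0 i Pi) (vanish_below_sum s F0)) _.
by apply: eq_truncM => //; apply: eq_trunc_refl.
Qed.

End TruncatedSeries.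

Section CarlitzSeries.
Variables (R : comNzRingType) (m : nat).
Local Notation M := {mpoly R[m]}.

Definition content (w : seq 'I_m) : 'X_{1..m} := (\sum_(a <- w) U_(a))%MM.

Definition word_mono (w : seq 'I_m) : M := 'X_[content w].

Fixpoint words (l : nat) : seq (seq 'I_m) :=
  if l is l'.+1 then [seq a :: w | a <- enum 'I_m, w <- words l'] else [:: [::]].

Lemma word_mono_nil : word_mono [::] = 1.
Proof. by rewrite /word_mono /content big_nil mpolyX0. Qed.

Lemma word_mono_cons a w : word_mono (a :: w) = 'X_a * word_mono w.
Proof. by rewrite /word_mono /content big_cons mpolyXD. Qed.

Lemma word_mono_cat w w' : word_mono (w ++ w') = word_mono w * word_mono w'.
Proof. by rewrite /word_mono /content big_cat mpolyXD. Qed.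

Lemma mdeg_content w : mdeg (content w) = size w.
Proof.
elim: w => [|a w IHw]; first by rewrite /content big_nil mdeg0.
by rewrite /content big_cons mdegD mdeg1 -/(content w) IHw.
Qed.

Lemma content_count w i : content w i = count_mem i w.
Proof.
rewrite /content mnm_sumE; elim: w => [|a w IHw]; first by rewrite big_nil.
by rewrite big_cons /= IHw mnm1E.
Qed.

Lemma mem_words l w : (w \in words l) = (size w == l).
Proof.
elim: l w => [|l IHl] [|a w] //=; first by apply/negbTE/allpairsP => -[[b w'] []].
apply/allpairsP/idP => [[[b w'] /= [_ w'l [_ ->]]]|wl]; first by rewrite eqSS -IHl.
by exists (a, w); rewrite /= mem_enum IHl -eqSS.
Qed.

Lemma word_mono_vanish n w : (n <= size w)%N -> vanish_below n (word_mono w).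
Proof.
move=> le_nw; apply/vanish_belowP => mu lt_mu; rewrite mcoeffX.
by case: eqP => // wmu; move: lt_mu; rewrite -wmu mdeg_content ltnNge le_nw.
Qed.

Lemma sum_wordsS (P : pred (seq 'I_m)) l :
  \sum_(w <- words l.+1 | P w) word_mono w =
  \sum_(b <- enum 'I_m) 'X_b * \sum_(w <- words l | P (b :: w)) word_mono w.
Proof.
rewrite big_mkcond /= (big_allpairs_dep (op := +%R)); apply: eq_bigr => b _.
rewrite mulr_sumr [RHS]big_mkcond /=; apply: eq_bigr => w _.
by rewrite word_mono_cons; case: (P _); rewrite ?mulr0.
Qed.

Definition carlitz_gf l : M := \sum_(w <- words l | carlitz w) word_mono w.

Definition carlitz_gf_after a l : M :=
  \sum_(w <- words l | carlitz (a :: w)) word_mono w.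

Lemma carlitz_gf0 : carlitz_gf 0 = 1.
Proof. by rewrite /carlitz_gf big_cons big_nil /= word_mono_nil addr0. Qed.

Lemma carlitz_gf_after0 a : carlitz_gf_after a 0 = 1.
Proof. by rewrite /carlitz_gf_after big_cons big_nil /= word_mono_nil addr0. Qed.

Lemma carlitz_gfS l : carlitz_gf l.+1 = \sum_(b <- enum 'I_m) 'X_b * carlitz_gf_after b l.
Proof. exact: sum_wordsS. Qed.

Lemma carlitz_gf_afterS a l :
  carlitz_gf_after a l.+1 = \sum_(b <- enum 'I_m | b != a) 'X_b * carlitz_gf_after b l.
Proof.
rewrite /carlitz_gf_after sum_wordsS [RHS]big_mkcond /=; apply: eq_bigr => b _.
rewrite eq_sym; case: eqP => [->|ne_ab].
  by rewrite big1 ?mulr0 // => w; rewrite /carlitz /= eqxx.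
by congr (_ * _); apply: eq_bigl => w; rewrite /carlitz /=; case: eqP.
Qed.

Lemma carlitz_gf_after_vanish a l : vanish_below l (carlitz_gf_after a l).
Proof.
rewrite /carlitz_gf_after big_seq_cond; apply: vanish_below_sum => w /andP[wl _].
by apply: word_mono_vanish; move: wl; rewrite mem_words => /eqP ->.
Qed.

Variable N : nat.
Local Notation eq_trunc := (eq_trunc N).
Local Notation frac1p := (frac1p N).
Local Notation inv1p := (inv1p N).

Definition carlitz_series : M := \sum_(l < N.+1) carlitz_gf l.

Definition carlitz_series_after a : M := \sum_(l < N.+1) carlitz_gf_after a l.

Definition carlitz_series1 : M := carlitz_series - 1.

Definition sum_frac1pX : M := \sum_(b <- enum 'I_m) frac1p 'X_b.

Lemma carlitz_seriesE :
  carlitz_series = 1 + \sum_(l < N) \sum_(b <- enum 'I_m) 'X_b * carlitz_gf_after b l.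
Proof.
rewrite /carlitz_series big_ord_recl carlitz_gf0; congr (_ + _).
by apply: eq_bigr => l _; rewrite lift0 carlitz_gfS.
Qed.

Lemma carlitz_series_afterE a : carlitz_series_after a =
  1 + \sum_(l < N) \sum_(b <- enum 'I_m | b != a) 'X_b * carlitz_gf_after b l.
Proof.
rewrite /carlitz_series_after big_ord_recl carlitz_gf_after0; congr (_ + _).
by apply: eq_bigr => l _; rewrite lift0 carlitz_gf_afterS.
Qed.

(* A Carlitz word either starts with a or may follow a. *)
Lemma mul1pX_carlitz_series_after a :
  (1 + 'X_a) * carlitz_series_after a = carlitz_series + 'X_a * carlitz_gf_after a N.
Proof.
rewrite mulrDl mul1r {2}/carlitz_series_after big_ord_recr /= mulrDr mulr_sumr addrA.
congr (_ + _); rewrite carlitz_series_afterE carlitz_seriesE -addrA; congr (_ + _).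
rewrite -big_split /=; apply: eq_bigr => l _.
by rewrite (bigD1_seq a) ?mem_enum ?enum_uniq //= addrC.
Qed.

Lemma carlitz_series_after_trunc a :
  eq_trunc (carlitz_series_after a) (inv1p 'X_a * carlitz_series).
Proof.
apply: (@eq_trunc_trans _ _ _ _ ((1 + 'X_a) * inv1p 'X_a * carlitz_series_after a)).
  rewrite -{1}[carlitz_series_after a]mul1r; apply: eq_truncM; last exact: eq_trunc_refl.
  by apply: eq_trunc_sym; apply: mul1p_inv1p; apply: vanish_below_mpolyX.
rewrite [(1 + _) * _]mulrC -mulrA mul1pX_carlitz_series_after mulrDr.
apply: eq_trunc_addr; apply: vanish_belowMl.
exact/vanish_below_mulX/carlitz_gf_after_vanish.
Qed.

Lemma carlitz_series_trunc :
  eq_trunc carlitz_series (1 + sum_frac1pX * carlitz_series).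
Proof.
rewrite {1}carlitz_seriesE exchange_big /= /sum_frac1pX mulr_suml.
apply: eq_truncD; first exact: eq_trunc_refl.
apply: eq_trunc_sum => b _; rewrite -mulr_sumr /frac1p -mulrA.
apply: (@eq_trunc_trans _ _ _ _ ('X_b * carlitz_series_after b)).
  rewrite /carlitz_series_after big_ord_recr /= mulrDr; apply: eq_trunc_sym.
  exact/eq_trunc_addr/vanish_below_mulX/carlitz_gf_after_vanish.
by apply: eq_truncM; [apply: eq_trunc_refl | apply: carlitz_series_after_trunc].
Qed.

Lemma carlitz_series1_vanish : vanish_below 1 carlitz_series1.
Proof.
rewrite /carlitz_series1 carlitz_seriesE [1 + _]addrC addrK.
by do 2![apply: vanish_below_sum => ? _]; apply: vanish_belowMr; apply: vanish_below_mpolyX.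
Qed.

Lemma frac1p_carlitz_series1 : eq_trunc (frac1p carlitz_series1) sum_frac1pX.
Proof.
have CE : 1 + carlitz_series1 = carlitz_series by rewrite addrC subrK.
have C_trunc : eq_trunc carlitz_series1 (sum_frac1pX * (1 + carlitz_series1)).
  rewrite CE; have := eq_truncD carlitz_series_trunc (eq_trunc_refl N (-1 : M)).
  by rewrite addrAC subrr add0r.
apply: (@eq_trunc_trans _ _ _ _ (sum_frac1pX * (1 + carlitz_series1) * inv1p carlitz_series1)).
  by apply: eq_truncM => //; apply: eq_trunc_refl.
rewrite -mulrA -[X in eq_trunc _ X]mulr1; apply: eq_truncM; first exact: eq_trunc_refl.
exact/mul1p_inv1p/carlitz_series1_vanish.
Qed.

End CarlitzSeries.

Section Counting.
Variables (R : comNzRingType) (m N : nat).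
Local Notation M := {mpoly R[m]}.

Lemma perm_tuples_words l : perm_eq [seq val t | t : l.-tuple 'I_m] (words m l).
Proof.
apply: uniq_perm.
- by rewrite map_inj_uniq ?enum_uniq //; apply: val_inj.
- elim: l => [|l IHl] //=; apply: allpairs_uniq_dep => //; first exact: enum_uniq.
  by move=> [a w] [b w'] _ _ /= [-> ->].
move=> w; rewrite mem_words; apply/mapP/idP => [[t _ ->]|/eqP wl].
  by rewrite size_tuple.
by exists (Tuple (introT eqP wl)); rewrite ?mem_enum.
Qed.

Lemma carlitz_series1E :
  carlitz_series1 R m N = \sum_(w <- words_upto m N | carlitz w) word_mono R w.
Proof.
rewrite /carlitz_series1 carlitz_seriesE [1 + _]addrC addrK /words_upto big_flatten /=.
rewrite big_map (iotaDl 1 0 N) big_map -(subn0 N) -/(index_iota 0 _) big_mkord subn0.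
apply: eq_bigr => l _; rewrite -carlitz_gfS /carlitz_gf.
by apply: perm_big; rewrite perm_sym perm_tuples_words.
Qed.

Lemma carlitz_series1X k : carlitz_series1 R m N ^+ k =
  \sum_(f <- facts_upto m N k | all (@carlitz m) f) word_mono R (flatten f).
Proof.
elim: k => [|k IHk].
  by rewrite expr0 /= big_cons big_nil /= word_mono_nil addr0.
rewrite exprS IHk carlitz_series1E /= [RHS]big_mkcond (big_allpairs_dep (op := +%R)) /=.
rewrite big_mkcond mulr_suml; apply: eq_bigr => w _.
rewrite mulr_sumr [RHS]big_mkcond; case: (carlitz w) => /=; last first.
  by rewrite big1 ?big1 // => f _; rewrite mul0r.
by rewrite big_mkcond; apply: eq_bigr => f _; case: ifP; rewrite ?word_mono_cat.
Qed.

Lemma content_eq_multinom w (r : 'I_m -> nat) :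
  (content w == [multinom r i | i < m]) = [forall i, count_mem i w == r i].
Proof.
apply/eqP/forallP => [wr i|wr]; first by rewrite -content_count wr mnmE.
by apply/mnmP => i; rewrite content_count mnmE; apply/eqP.
Qed.

Lemma mcoeff_carlitz_series1X k (r : 'I_m -> nat) :
  (carlitz_series1 R m N ^+ k)@_[multinom r i | i < m] =
  (count (good_fact r) (facts_upto m N k))%:R.
Proof.
rewrite carlitz_series1X raddf_sum /= -sum1_count natr_sum /good_fact big_mkcondr /=.
by apply: eq_bigr => f _; rewrite mcoeffX content_eq_multinom; case: [forall _, _].
Qed.

Lemma mcoeff_prod_series (l : nat -> R) (r : 'I_m -> nat) : (forall i, r i <= N)%N ->
  (\prod_(i < m) \sum_(t < N.+1) l t *: ('X_i : M) ^+ t)@_[multinom r i | i < m]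
  = \prod_(i < m) l (r i).
Proof.
move=> le_rN; rewrite bigA_distr_bigA /= raddf_sum /=.
set mr := [multinom r i | i < m].
have mcoeff_term (f : {ffun 'I_m -> 'I_N.+1}) :
    (\prod_(i < m) (l (f i) *: ('X_i : M) ^+ f i))@_mr =
    (\prod_(i < m) l (f i)) * ([multinom (f i : nat) | i < m] == mr)%:R.
  rewrite scaler_prod mcoeffZ -mcoeffX mpolyXE_id; congr (_ * _@_ _).
  by apply: eq_bigr => i _; rewrite mnmE.
pose fr : {ffun 'I_m -> 'I_N.+1} := [ffun i => inord (r i)].
have frE i : (fr i : nat) = r i by rewrite ffunE inordK // ltnS.
have mfr : [multinom (fr i : nat) | i < m] = mr by apply/mnmP => i; rewrite !mnmE frE.
rewrite (bigD1 fr) //= mcoeff_term mfr eqxx mulr1 [X in _ + X]big1 ?addr0.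
  by apply: eq_bigr => i _; rewrite frE.
move=> f ne_f; rewrite mcoeff_term; case: eqP; rewrite ?mulr0 // => /mnmP fE.
case/eqP: ne_f; apply/ffunP => i; apply: val_inj.
by have := fE i; rewrite !mnmE /= frE.
Qed.

End Counting.

Section LaguerreSeries.
Variable R : numFieldType.
Local Notation P := {poly R}.

Definition divpowX (j : nat) : P := (j`!%:R)^-1 *: 'X^j.

Lemma divpowX0 : divpowX 0 = 1.
Proof. by rewrite /divpowX invr1 scale1r expr0. Qed.

Lemma divpowX_binomial i j :
  divpowX (i + j) *+ 'C(i + j, i) = divpowX i * divpowX j.
Proof.
rewrite /divpowX -scalerAl -scalerAr scalerA -exprD scalerMnl; congr (_ *: _).
have factE : ((i + j)`!%:R : R) = 'C(i + j, i)%:R * (i`!%:R * j`!%:R).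
  by rewrite -!natrM; have := bin_fact (leq_addr j i); rewrite addKn => ->.
have binC_neq0 : ('C(i + j, i)%:R : R) != 0 by rewrite pnatr_eq0 -lt0n bin_gt0 leq_addr.
by rewrite factE -mulr_natr invfM mulrAC mulVf // mul1r invfM.
Qed.

(* Coefficientwise form of exp(x y/(1+y)) = sum_j (x^j/j!) (y/(1+y))^j. *)
Lemma lpoly_frac1p_coef N k : (k <= N)%N ->
  lpoly R k = \sum_(j < N.+1) frac1p_coef P k j * divpowX j.
Proof.
case: k => [|k] le_kN.
  rewrite /lpoly big_ord_recl /= divpowX0 mulr1 big1 ?addr0 // => j _.
  by rewrite mul0r.
rewrite big_ord_recl /= mul0r add0r /lpoly big_add1 /= big_mkord.
rewrite (big_ord_widen _ (fun j => ((-1) ^+ (k.+1 - j.+1) * ('C(k, j.+1.-1))%:R /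
  ((j.+1)`!)%:R) *: 'X^(j.+1)) le_kN) big_mkcond /=.
apply: eq_bigr => j _; rewrite /bump /=.
have polyCE e n : ((-1 : P) ^+ e *+ n) = ((-1 : R) ^+ e *+ n)%:P.
  by rewrite rmorphMn rmorphXn rmorphN1.
rewrite polyCE /divpowX -scalerAr mul_polyC scalerA.
case: ltnP => [lt_jk|le_kj]; first by congr (_ *: _); rewrite mulr_natr mulrC.
by rewrite bin_small // mulr0n mulr0 scale0r.
Qed.

Lemma laguerre_series_trunc m N (y : {mpoly P[m]}) : vanish_below 1 y ->
  eq_trunc N (\sum_(k < N.+1) lpoly R k *: y ^+ k) (dp_series N divpowX (frac1p N y)).
Proof.
by apply: dp_series_frac1p => k; apply: lpoly_frac1p_coef; rewrite -ltnS.
Qed.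

Lemma laguerre_carlitz_trunc m N :
  eq_trunc N (\sum_(k < N.+1) lpoly R k *: carlitz_series1 P m N ^+ k)
    (\prod_(i < m) \sum_(t < N.+1) lpoly R t *: ('X_i : {mpoly P[m]}) ^+ t).
Proof.
have frac1pX0 i : vanish_below 1 (frac1p N ('X_i : {mpoly P[m]})).
  exact/frac1p_vanish/vanish_below_mpolyX.
apply: eq_trunc_trans (laguerre_series_trunc N (carlitz_series1_vanish P m N)) _.
apply: eq_trunc_trans (eq_trunc_dp_series _ (frac1p_carlitz_series1 P m N)) _.
apply: eq_trunc_trans
  (dp_series_sum N divpowX_binomial divpowX0 (enum _) (fun i _ => frac1pX0 i)) _.
rewrite big_enum /=; apply: eq_trunc_prod => i _.
exact/eq_trunc_sym/laguerre_series_trunc/vanish_below_mpolyX.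
Qed.

End LaguerreSeries.

Theorem corollary2p8 (R : numFieldType) (m : nat) (r : 'I_m -> nat) :
  \prod_(i < m) lpoly R (r i) =
  \sum_(k < (\sum_(i < m) r i)%N.+1) (nfact r k)%:R *: lpoly R k.
Proof.
set N := (\sum_(i < m) r i)%N.
have le_rN i : (r i <= N)%N by rewrite /N (bigD1 i) //= leq_addr.
have mdeg_r : (mdeg [multinom r i | i < m] <= N)%N.
  by rewrite mdegE; under eq_bigr do rewrite mnmE.
have := eq_trunc_mcoeff (laguerre_carlitz_trunc R m N) mdeg_r.
rewrite mcoeff_prod_series // => <-.
rewrite raddf_sum /=; apply: eq_bigr => k _.
by rewrite mcoeffZ mcoeff_carlitz_series1X mulr_natr scaler_nat.
Qed.
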